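(* Let $1\le k<d$, $0\le\ell<d$ and $t\ge0$ be integers. If $\ell\ge\min\{k,t\}$, then $\mathrm{Pol}^\ell_t(\mathcal{G}_{k,d})=\mathrm{Pol}_t(\mathcal{G}_{k,d})$.
   Context: $\mathscr{H}_d$ denotes the real symmetric $d\times d$ matrices with $\langle A,B\rangle=\operatorname{trace}(AB)$. $\mathcal{G}_{k,d}=\{P\in\mathscr{H}_d:P^2=P,\ \operatorname{trace}(P)=k\}$. $\mathrm{Pol}^\ell_t(\mathcal{G}_{k,d})$ is the linear span of the functions $P\mapsto\langle M,P\rangle^s$ on $\mathcal{G}_{k,d}$, with $M\in\mathscr{H}_d$ of rank at most $\ell$ and $0\le s\le t$. $\mathrm{Pol}_t(\mathcal{G}_{k,d})$ is the space of restrictions to $\mathcal{G}_{k,d}$ of polynomials of degree at most $t$ on $\mathscr{H}_d$ (in the matrix entries). *)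

From HB Require Import structures.
From mathcomp Require Import all_boot all_order all_algebra.
From mathcomp Require Import reals.
From mathcomp Require Import mpoly.
Set Implicit Arguments. Unset Strict Implicit. Unset Printing Implicit Defensive.
Import Order.TTheory GRing.Theory Num.Theory.
Local Open Scope ring_scope.

Definition symmx (R : realType) (d : nat) (A : 'M[R]_d) : Prop := A^T = A.

Definition mxdot (R : realType) (d : nat) (A B : 'M[R]_d) : R := \tr (A *m B).

Definition grass (R : realType) (k d : nat) (P : 'M[R]_d) : Prop :=
  symmx P /\ P *m P = P /\ \tr P = k%:R.

Definition in_PolL (R : realType) (k d l t : nat) (f : 'M[R]_d -> R) : Prop :=
  exists (n : nat) (c : 'I_n -> R) (M : 'I_n -> 'M[R]_d) (s : 'I_n -> nat),
    (forall i, symmx (M i) /\ (\rank (M i) <= l)%N /\ (s i <= t)%N) /\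
    (forall P, grass k P -> f P = \sum_(i < n) c i * mxdot (M i) P ^+ s i).

(* f lies in Pol_t(G_{k,d}): on G_{k,d} it agrees with a polynomial of total
   degree at most t in the d*d matrix entries (variables indexed via mxvec). *)
Definition in_Pol (R : realType) (k d t : nat) (f : 'M[R]_d -> R) : Prop :=
  exists p : {mpoly R[d * d]},
    (msize p <= t.+1)%N /\
    (forall P, grass k P -> f P = p.@[fun j => mxvec P 0 j]).

From HB Require Import structures.
From mathcomp Require Import all_boot all_order all_algebra.
From mathcomp Require Import reals.
From mathcomp Require Import mpoly.
From mathcomp Require Import zify ring.
From Stdlib Require Import Classical.
Set Implicit Arguments. Unset Strict Implicit. Unset Printing Implicit Defensive.
Import Order.TTheory GRing.Theory Num.Theory.
Local Open Scope ring_scope.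

(* Each <M,P>^s is a polynomial of degree s in the entries of P, which gives
   one inclusion. Conversely it suffices to produce every monomial of degree at
   most t in the entries of P. If t <= l, write each entry P_ab as a difference
   of two rank-one functionals <(e_a +- e_b)^T (e_a +- e_b), P> / 4 and expand
   the resulting product of at most t linear forms by polarization, i.e. as an
   iterated finite difference of x |-> x^s: the powers that appear are powers
   of sums of at most t rank-one matrices. If k <= l, multiply by powers of
   tr P / k = 1 to reach degree exactly t; a monomial of degree t is a linear
   functional of the tensor power P^{(x)t}, whose values on G_{k,d} span a
   finite-dimensional space spanned by finitely many Q^{(x)t} with Q in
   G_{k,d}, and <Q^{(x)t}, P^{(x)t}> = <Q,P>^t with rank Q = k <= l. *)

(** * Iterated finite differences and polarization *)

(* [findiff h ys a] is the iterated forward difference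
   Delta_{y_1} ... Delta_{y_n} h at [a], stored through its signed evaluation
   points [polar_nodes ys a] so that it can be transported along additive maps. *)
Section FiniteDifferences.
Variables (R : comNzRingType) (V : zmodType).

Fixpoint polar_nodes (ys : seq V) (a : V) : seq (R * V) :=
  if ys is y :: ys' then
    polar_nodes ys' (a + y) ++ [seq (- e.1, e.2) | e <- polar_nodes ys' a]
  else [:: (1, a)].

Definition findiff (h : V -> R) (ys : seq V) (a : V) : R :=
  \sum_(e <- polar_nodes ys a) e.1 * h e.2.

Lemma findiff_nil h a : findiff h [::] a = h a.
Proof. by rewrite /findiff big_seq1 mul1r. Qed.

Lemma findiff_cons h y ys a :
  findiff h (y :: ys) a = findiff h ys (a + y) - findiff h ys a.
Proof.
rewrite /findiff /= big_cat big_map -sumrN.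
by congr (_ + _); apply: eq_bigr => e _; rewrite mulNr.
Qed.

Lemma eq_findiff h1 h2 ys a : h1 =1 h2 -> findiff h1 ys a = findiff h2 ys a.
Proof. by move=> e; apply: eq_bigr => x _; rewrite e. Qed.

Lemma findiff_shift h ys a y :
  findiff h ys (a + y) = findiff (fun x => h (x + y)) ys a.
Proof.
elim: ys a => [|z ys IH] a; first by rewrite !findiff_nil.
by rewrite !findiff_cons addrAC !IH.
Qed.

Lemma findiff_sum (I : Type) (r : seq I) (F : I -> V -> R) ys a :
  findiff (fun x => \sum_(j <- r) F j x) ys a = \sum_(j <- r) findiff (F j) ys a.
Proof.
rewrite /findiff exchange_big /=; apply: eq_bigr => e _.
by rewrite mulr_sumr.
Qed.

Lemma findiff_scale c h ys a : findiff (fun x => c * h x) ys a = c * findiff h ys a.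
Proof.
rewrite /findiff mulr_sumr; apply: eq_bigr => e _.
by rewrite mulrCA.
Qed.

Lemma polar_nodes_mask ys a e : e \in polar_nodes ys a ->
  exists m : bitseq, e.2 = a + \sum_(y <- mask m ys) y.
Proof.
elim: ys a e => [|y ys IH] a e /=.
  by rewrite inE => /eqP ->; exists [::]; rewrite big_nil addr0.
rewrite mem_cat => /orP[/IH [m ->] | /mapP [e' /IH [m ->] ->]].
  by exists (true :: m); rewrite /= big_cons addrA.
by exists (false :: m).
Qed.

End FiniteDifferences.

Lemma findiff_morph (R : comNzRingType) (V W : zmodType) (f : V -> W) (h : W -> R) ys a :
  {morph f : x y / x + y} -> findiff h (map f ys) (f a) = findiff (h \o f) ys a.
Proof.
move=> fD; elim: ys a => [|y ys IH] a; first by rewrite !findiff_nil.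
by rewrite /= !findiff_cons -fD !IH.
Qed.

Section PowerDifferences.
Variable R : comNzRingType.
Implicit Types (ys : seq R) (a y : R).

Lemma findiff_cons_exp y ys a m :
  findiff (fun x => x ^+ m) (y :: ys) a =
  \sum_(i < m) y ^+ (m - i) *+ 'C(m, i) * findiff (fun x => x ^+ i) ys a.
Proof.
rewrite findiff_cons findiff_shift.
rewrite (@eq_findiff _ _ _ (fun x => \sum_(i < m.+1) y ^+ (m - i) *+ 'C(m, i) * x ^+ i)).
  rewrite findiff_sum big_ord_recr /= subnn expr0 binn findiff_scale mul1r addrK.
  by apply: eq_bigr => i _; rewrite findiff_scale.
by move=> x; rewrite addrC exprDn; apply: eq_bigr => i _; rewrite mulrnAl.
Qed.

Lemma findiff_exp_lt ys a m : (m < size ys)%N -> findiff (fun x => x ^+ m) ys a = 0.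
Proof.
elim: ys a m => [|y ys IH] a m //= ltm.
rewrite findiff_cons_exp big1 // => i _.
by rewrite IH ?mulr0 // (leq_trans (ltn_ord i)).
Qed.

Lemma findiff_exp_size ys a :
  findiff (fun x => x ^+ size ys) ys a = (size ys)`!%:R * \prod_(y <- ys) y.
Proof.
elim: ys a => [|y ys IH] a; first by rewrite findiff_nil big_nil expr0 mulr1.
rewrite findiff_cons_exp big_ord_recr /= big1 => [|i _]; last first.
  by rewrite findiff_exp_lt ?mulr0.
rewrite IH add0r subSn // subnn expr1 binSn big_cons factS natrM mulr_natr.
ring.
Qed.

End PowerDifferences.

Lemma prod_polarization (R : numFieldType) (ys : seq R) :
  \prod_(y <- ys) y = (size ys)`!%:R^-1 * findiff (fun x => x ^+ size ys) ys 0.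
Proof.
by rewrite findiff_exp_size mulKf // pnatr_eq0 -lt0n fact_gt0.
Qed.

Lemma mxrank_sum_rank1 (F : fieldType) m n (As : seq 'M[F]_(m, n)) :
  (forall A, A \in As -> (\rank A <= 1)%N) -> (\rank (\sum_(A <- As) A)%R <= size As)%N.
Proof.
elim: As => [|A As IH] rk1; first by rewrite big_nil mxrank0.
rewrite big_cons (leq_trans (mxrank_add _ _)) //= -add1n leq_add ?rk1 ?mem_head //.
by apply: IH => B BAs; rewrite rk1 // inE BAs orbT.
Qed.

Lemma finite_spanning_family (F : fieldType) n (T : Type) (S : T -> Prop)
    (g : T -> 'rV[F]_n) :
  exists m (xs : 'I_m -> T),
    (forall i, S (xs i)) /\ forall x, S x -> (g x <= \matrix_i g (xs i))%MS.
Proof.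
(* Otherwise there are families of every rank, against rank <= n. *)
apply: NNPP => nospan.
have grow r : exists m (xs : 'I_m -> T),
    (forall i, S (xs i)) /\ (r <= \rank (\matrix_i g (xs i)))%N.
  elim: r => [|r [m [xs [Sxs rk]]]].
    have xs0 : 'I_0 -> T by case.
    by exists 0%N, xs0; split => // -[].
  have [x [Sx gx]] : exists x, S x /\ ~~ (g x <= \matrix_i g (xs i))%MS.
    apply: NNPP => all_in; apply: nospan; exists m, xs; split => // x Sx.
    by apply/negPn/negP => gx; apply: all_in; exists x.
  pose ys (i : 'I_(m + 1)) := if split i is inl j then xs j else x.
  exists (m + 1)%N, ys; split=> [i|]; first by rewrite /ys; case: split.
  have -> : \matrix_i g (ys i) = col_mx (\matrix_i g (xs i)) (g x).
    apply/row_matrixP => i; rewrite rowK -[i](@splitK m 1) /ys.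
    case: (split i) => j; rewrite unsplitK ?rowKu ?rowK // rowKd [j]ord1.
    by apply/rowP => c; rewrite !mxE.
  apply: leq_ltn_trans rk _.
  have := submx_refl (col_mx (\matrix_i g (xs i)) (g x)).
  rewrite col_mx_sub => /andP [sub_xs sub_x].
  rewrite (ltn_leqif (mxrank_leqif_sup sub_xs)).
  by apply: contra gx => /(submx_trans sub_x).
have [m [xs [_ rk]]] := grow n.+1.
by have := rank_leq_col (\matrix_i g (xs i)); lia.
Qed.

Lemma row_sqnorm_eq0 (R : realFieldType) n (z : 'rV[R]_n) : (z *m z^T) 0 0 = 0 -> z = 0.
Proof.
rewrite mxE => z2_0.
have sq0 : \sum_j z 0 j ^+ 2 = 0.
  by rewrite -[RHS]z2_0; apply: eq_bigr => j _; rewrite mxE expr2.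
apply/rowP => j; rewrite mxE; apply/eqP; rewrite -sqrf_eq0; apply/eqP.
exact: (psumr_eq0P (fun i _ => sqr_ge0 (z 0 i)) sq0).
Qed.

Lemma mxrank_gram (R : realFieldType) m n (X : 'M[R]_(m, n)) : \rank (X^T *m X) = \rank X.
Proof.
apply/eqP; rewrite eqn_leq mxrankM_maxr /=.
have ker_sub : (kermx (X^T *m X) <= kermx X^T)%MS.
  apply/sub_kermxP; apply/row_matrixP => i; rewrite row_mul row0.
  have ker0 : row i (kermx (X^T *m X)) *m (X^T *m X) = 0.
    by rewrite -row_mul mulmx_ker row0.
  apply: row_sqnorm_eq0.
  by rewrite trmx_mul trmxK !mulmxA -(mulmxA _ X^T X) ker0 mul0mx mxE.
have := mxrankS ker_sub; rewrite !mxrank_ker mxrank_tr.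
have := rank_leq_col X; have := rank_leq_col (X^T *m X); lia.
Qed.

Lemma functional_on_rowspace (R : realFieldType) m n (c : 'rV[R]_n) (B : 'M[R]_(m, n)) :
  exists a : 'rV[R]_m, forall v : 'rV[R]_n, (v <= B)%MS -> c *m v^T = a *m (B *m v^T).
Proof.
(* B B^T and B^T have the same rank, hence the same row space. *)
have cBT_sub : (c *m B^T <= B *m B^T)%MS.
  apply: submx_trans (submxMl _ _) _.
  have BBT_BT : (B *m B^T <= B^T)%MS by apply: submxMl.
  have := mxrank_leqif_eq BBT_BT; rewrite -{1}(trmxK B) mxrank_gram.
  by move=> /leqif_refl /andP [].
have [a Ea] := submxP cBT_sub.
exists a => v /submxP [u ->].
by rewrite trmx_mul !mulmxA Ea !mulmxA.
Qed.

Lemma sum_mxvec_index (V : nmodType) m n (F : 'I_(m * n) -> V) :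
  \sum_j F j = \sum_i \sum_j F (mxvec_index i j).
Proof.
rewrite pair_big /= (reindex (uncurry (@mxvec_index m n))) /=.
  by apply: eq_bigr => -[i j].
exact: curry_mxvec_bij.
Qed.

Lemma mxrank_gram_row (F : fieldType) n (u : 'rV[F]_n) : (\rank (u^T *m u) <= 1)%N.
Proof. exact: leq_trans (mxrankM_maxr _ _) (rank_leq_row _). Qed.

Section InnerProduct.
Variables (R : realType) (d : nat).
Implicit Types (M P : 'M[R]_d) (u : 'rV[R]_d).

Lemma mxdot_mxvec M P : mxdot M P = \sum_j mxvec M^T 0 j * mxvec P 0 j.
Proof.
rewrite /mxdot sum_mxvec_index exchange_big; apply: eq_bigr => i _.
by rewrite mxE; apply: eq_bigr => j _; rewrite !mxvecE mxE.
Qed.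

Lemma mxdotDl M1 M2 P : mxdot (M1 + M2) P = mxdot M1 P + mxdot M2 P.
Proof. by rewrite /mxdot mulmxDl mxtraceD. Qed.

Lemma mxdot_gram u P : mxdot (u^T *m u) P = (u *m P *m u^T) 0 0.
Proof. by rewrite /mxdot -mulmxA mxtrace_mulC /mxtrace big_ord1 [ord0]ord1. Qed.

Lemma symmx_gram u : symmx (u^T *m u).
Proof. by rewrite /symmx trmx_mul trmxK. Qed.

Lemma entry_polarization P a b : symmx P ->
  let ea : 'rV[R]_d := delta_mx 0 a in let eb : 'rV[R]_d := delta_mx 0 b in
  P a b = mxdot ((ea + eb)^T *m (ea + eb)) P / 4%:R
        - mxdot ((ea - eb)^T *m (ea - eb)) P / 4%:R.
Proof.
move=> symP ea eb; rewrite !mxdot_gram !linearD /= !linearN /=.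
have addE (A B : 'M[R]_1) : (A + B) 0 0 = A 0 0 + B 0 0 by rewrite mxE.
have oppE (A : 'M[R]_1) : (- A) 0 0 = - A 0 0 by rewrite mxE.
rewrite !(mulmxDl, mulmxDr, mulNmx, mulmxN) !(addE, oppE).
have entry i j : ((delta_mx 0 i : 'rV[R]_d) *m P *m (delta_mx 0 j : 'rV[R]_d)^T) 0 0 = P i j.
  by rewrite trmx_delta -rowE -colE !mxE.
rewrite !entry (_ : P b a = P a b); first by field.
by rewrite -{1}symP mxE.
Qed.

Lemma symmx_sum (As : seq 'M[R]_d) :
  (forall A, A \in As -> symmx A) -> symmx (\sum_(A <- As) A).
Proof. by move=> symAs; rewrite /symmx raddf_sum; apply: eq_big_seq. Qed.

Lemma mxrank_grass k P : grass k P -> \rank P = k.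
Proof.
(* In a rank factorization P = X Y, idempotence forces Y X = 1, so that
   rank P = tr (Y X) = tr P. *)
case=> _ [idemP trP].
have [B BX] := row_fullP (col_base_full P).
have [C YC] := row_freeP (row_base_free P).
move: (col_base P) (row_base P) (mulmx_base P) BX YC => X Y XY BX YC.
have YX : Y *m X = 1%:M.
  have : B *m (X *m Y *m (X *m Y)) *m C = B *m (X *m Y) *m C by rewrite XY idemP.
  by rewrite !mulmxA BX mul1mx -!mulmxA YC mulmx1.
by apply/eqP; rewrite -(eqr_nat R) -trP -[in \tr P]XY mxtrace_mulC YX mxtrace1.
Qed.

End InnerProduct.

(** * Combinations of powers of low-rank functionals *)

(* A list-indexed form of [in_PolL], which is closed under sums. *)
Section PolLCombinations.
Variables (R : realType) (d k l t : nat).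

Definition in_PolL_seq (f : 'M[R]_d -> R) : Prop :=
  exists L : seq (R * 'M[R]_d * nat),
    (forall e, e \in L -> symmx e.1.2 /\ (\rank e.1.2 <= l)%N /\ (e.2 <= t)%N) /\
    (forall P, grass k P -> f P = \sum_(e <- L) e.1.1 * mxdot e.1.2 P ^+ e.2).

Lemma in_PolL_of_seq f : in_PolL_seq f -> in_PolL k l t f.
Proof.
case=> L [okL fL]; pose e0 : R * 'M[R]_d * nat := (0, 0, 0%N).
exists (size L), (fun i => (nth e0 L i).1.1), (fun i => (nth e0 L i).1.2),
  (fun i => (nth e0 L i).2).
split=> [i|P GP]; first by apply: okL; rewrite mem_nth.
by rewrite fL // (big_nth e0) big_mkord.
Qed.

Lemma in_PolL_seq_ext f g :
  in_PolL_seq f -> (forall P, grass k P -> f P = g P) -> in_PolL_seq g.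
Proof. by case=> L [okL fL] fg; exists L; split=> // P GP; rewrite -fg ?fL. Qed.

Lemma in_PolL_seq_pow M s : symmx M -> (\rank M <= l)%N -> (s <= t)%N ->
  in_PolL_seq (fun P => mxdot M P ^+ s).
Proof.
move=> symM rkM le_st; exists [:: (1, M, s)].
by split=> [e /[!inE] /eqP -> //|P _]; rewrite big_seq1 mul1r.
Qed.

Lemma in_PolL_seq_add f g :
  in_PolL_seq f -> in_PolL_seq g -> in_PolL_seq (fun P => f P + g P).
Proof.
case=> [Lf [okf fL]] [Lg [okg gL]]; exists (Lf ++ Lg); split.
  by move=> e /[!mem_cat] /orP[/okf|/okg].
by move=> P GP; rewrite big_cat fL ?gL.
Qed.

Lemma in_PolL_seq_scale c f : in_PolL_seq f -> in_PolL_seq (fun P => c * f P).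
Proof.
case=> L [okL fL]; exists [seq (c * e.1.1, e.1.2, e.2) | e <- L]; split.
  by move=> e /mapP [e' /okL ok ->].
by move=> P GP; rewrite fL // big_map mulr_sumr; apply: eq_bigr => e _; rewrite mulrA.
Qed.

Lemma in_PolL_seq_sum (I : eqType) (r : seq I) (F : I -> 'M[R]_d -> R) :
  (forall i, i \in r -> in_PolL_seq (F i)) ->
  in_PolL_seq (fun P => \sum_(i <- r) F i P).
Proof.
elim: r => [|i r IH] Fr.
  by exists [::]; split=> // P _; rewrite !big_nil.
have Fr' : in_PolL_seq (fun P => \sum_(j <- r) F j P).
  by apply: IH => j jr; apply: Fr; rewrite inE jr orbT.
apply: in_PolL_seq_ext (in_PolL_seq_add (Fr i (mem_head _ _)) Fr') _.
by move=> P _; rewrite big_cons.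
Qed.

End PolLCombinations.

(** * Monomials in the entries *)

Section MonomialsInPolL.
Variables (R : realType) (d k l t : nat).
Implicit Types (P : 'M[R]_d) (As : seq 'M[R]_d) (xs : seq 'I_(d * d)).

Lemma in_PolL_seq_prod_rank1 As :
  (forall A, A \in As -> symmx A /\ (\rank A <= 1)%N) ->
  (size As <= t)%N -> (t <= l)%N ->
  in_PolL_seq k l t (fun P => \prod_(A <- As) mxdot A P).
Proof.
move=> As1 le_As_t le_tl; set s := size As.
pose F e P := s`!%:R^-1 * e.1 * mxdot e.2 P ^+ s.
apply: in_PolL_seq_ext (in_PolL_seq_sum (r := polar_nodes R As 0) (F := F) _) _.
  move=> e /polar_nodes_mask [m Em]; rewrite /F Em add0r; apply: in_PolL_seq_scale.
  have mAs A : A \in mask m As -> symmx A /\ (\rank A <= 1)%N.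
    by move/mem_mask; apply: As1.
  apply: in_PolL_seq_pow => //.
  - by apply: symmx_sum => A /mAs [].
  - apply: leq_trans (mxrank_sum_rank1 (fun A mA => (mAs A mA).2)) _.
    exact: leq_trans (size_subseq (mask_subseq m As)) (leq_trans le_As_t le_tl).
move=> P _; have mxdot0 : mxdot 0 P = 0 by rewrite /mxdot mul0mx mxtrace0.
rewrite -(big_map (fun A => mxdot A P) xpredT id) prod_polarization size_map.
rewrite -[X in findiff _ _ X]mxdot0.
rewrite findiff_morph => [|A B]; last exact: mxdotDl.
by rewrite /findiff mulr_sumr; apply: eq_bigr => e _; rewrite mulrA.
Qed.

Definition mxmonomial P xs := \prod_(x <- xs) mxvec P 0 x.

Lemma in_PolL_seq_monomial_rank1 xs As :
  (forall A, A \in As -> symmx A /\ (\rank A <= 1)%N) ->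
  (size xs + size As <= t)%N -> (t <= l)%N ->
  in_PolL_seq k l t (fun P => mxmonomial P xs * \prod_(A <- As) mxdot A P).
Proof.
elim: xs As => [|x xs IH] As As1 /= le_t le_tl.
  apply: in_PolL_seq_ext (in_PolL_seq_prod_rank1 As1 le_t le_tl) _.
  by move=> P _; rewrite /mxmonomial big_nil mul1r.
case/mxvec_indexP: x => a b.
set ea : 'rV[R]_d := delta_mx 0 a; set eb : 'rV[R]_d := delta_mx 0 b.
have rank1_As (u : 'rV[R]_d) : forall A, A \in u^T *m u :: As -> symmx A /\ (\rank A <= 1)%N.
  move=> A /[!inE] /orP[/eqP ->|/As1//].
  by split; [exact: symmx_gram | exact: mxrank_gram_row].
have IHu u := IH (u^T *m u :: As) (rank1_As u).
have {}le_t : (size xs + size (ea^T *m ea :: As) <= t)%N by rewrite /= addnS -addSn.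
apply: in_PolL_seq_ext (in_PolL_seq_add
  (in_PolL_seq_scale (4%:R^-1) (IHu (ea + eb) le_t le_tl))
  (in_PolL_seq_scale (- 4%:R^-1) (IHu (ea - eb) le_t le_tl))) _.
move=> P [symP _]; rewrite /mxmonomial big_cons mxvecE entry_polarization // !big_cons.
rewrite -/ea -/eb; ring.
Qed.

Lemma in_PolL_seq_monomial_small xs : (size xs <= t)%N -> (t <= l)%N ->
  in_PolL_seq k l t (fun P => mxmonomial P xs).
Proof.
move=> le_xs le_tl.
apply: in_PolL_seq_ext (in_PolL_seq_monomial_rank1 (xs := xs) (As := [::]) _ _ le_tl) _ => //.
  by rewrite addn0.
by move=> P _; rewrite big_nil mulr1.
Qed.

Lemma mxmonomial_homogenize P xs : (0 < k)%N -> grass k P ->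
  mxmonomial P xs = k%:R^-1 * \sum_(a < d) mxmonomial P (mxvec_index a a :: xs).
Proof.
move=> k_gt0 [_ [_ trP]].
under eq_bigr do rewrite /mxmonomial big_cons mxvecE.
by rewrite -mulr_suml -/(\tr P) trP mulKf // pnatr_eq0 -lt0n.
Qed.

Lemma in_PolL_seq_homogenize : (0 < k)%N ->
  (forall ys, size ys = t -> in_PolL_seq k l t (fun P => mxmonomial P ys)) ->
  forall xs, (size xs <= t)%N -> in_PolL_seq k l t (fun P => mxmonomial P xs).
Proof.
move=> k_gt0 top xs le_xs; move Egap: (t - size xs)%N => gap.
elim: gap xs le_xs Egap => [|gap IH] xs le_xs Egap.
  by apply: top; apply/eqP; rewrite eqn_leq le_xs -subn_eq0 Egap.
pose F a P := mxmonomial P (mxvec_index a a :: xs).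
apply: in_PolL_seq_ext (in_PolL_seq_scale k%:R^-1 (in_PolL_seq_sum (F := F) _)) _.
- move=> a _; apply: IH => /=; first by rewrite -subn_gt0 Egap.
  by rewrite subnS Egap.
- by move=> P GP; rewrite (mxmonomial_homogenize _ k_gt0 GP).
Qed.

(* The s-th tensor power of [mxvec P], indexed by words of length s. *)
Definition mxvec_tensor s P : 'rV[R]_#|{ffun 'I_s -> 'I_(d * d)}| :=
  \row_i \prod_(r < s) mxvec P 0 ((enum_val i : {ffun 'I_s -> 'I_(d * d)}) r).

Lemma mxvec_tensor_dot s M P :
  (mxvec_tensor s M^T *m (mxvec_tensor s P)^T) 0 0 = mxdot M P ^+ s.
Proof.
rewrite mxE; under eq_bigr do rewrite !mxE.
rewrite -(big_enum_val (fun f : {ffun 'I_s -> 'I_(d * d)} =>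
   (\prod_(r < s) mxvec M^T 0 (f r)) * \prod_(r < s) mxvec P 0 (f r))) /=.
under eq_bigr do rewrite -big_split /=.
rewrite -(bigA_distr_bigA (fun (r : 'I_s) j => mxvec M^T 0 j * mxvec P 0 j)) /=.
by rewrite prodr_const card_ord mxdot_mxvec.
Qed.

Lemma mxmonomial_tensor P xs : mxmonomial P xs =
  mxvec_tensor (size xs) P 0 (enum_rank [ffun r => tnth (in_tuple xs) r]).
Proof.
rewrite mxE enum_rankK /mxmonomial big_tnth.
by apply: eq_bigr => r _; rewrite ffunE.
Qed.

Lemma in_PolL_seq_tensor_functional s (c : 'rV[R]_#|{ffun 'I_s -> 'I_(d * d)}|) :
  (k <= l)%N -> (s <= t)%N ->
  in_PolL_seq k l t (fun P => (c *m (mxvec_tensor s P)^T) 0 0).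
Proof.
(* Tensor powers of finitely many Q in G_{k,d} span those of all of G_{k,d}. *)
move=> le_kl le_st.
have [m [Qs [GQs span]]] := finite_spanning_family (@grass R k d) (mxvec_tensor s).
have [a Ea] := functional_on_rowspace c (\matrix_i mxvec_tensor s (Qs i)).
pose F i P := a 0 i * mxdot (Qs i) P ^+ s.
apply: in_PolL_seq_ext (in_PolL_seq_sum (r := index_enum 'I_m) (F := F) _) _.
  move=> i _; have [symQ _] := GQs i.
  by apply/in_PolL_seq_scale/in_PolL_seq_pow; rewrite ?(mxrank_grass (GQs i)).
move=> P GP; rewrite Ea ?span // mxE; apply: eq_bigr => i _.
have [symQ _] := GQs i.
by rewrite /F -mxvec_tensor_dot symQ !mxE; congr (_ * _); apply: eq_bigr => j _; rewrite !mxE.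
Qed.

Lemma in_PolL_seq_monomial_large xs : (0 < k)%N -> (k <= l)%N -> (size xs <= t)%N ->
  in_PolL_seq k l t (fun P => mxmonomial P xs).
Proof.
move=> k_gt0 le_kl; apply: in_PolL_seq_homogenize => // ys size_ys.
pose c : 'rV[R]_#|{ffun 'I_(size ys) -> 'I_(d * d)}| :=
  delta_mx 0 (enum_rank [ffun r => tnth (in_tuple ys) r]).
apply: in_PolL_seq_ext (in_PolL_seq_tensor_functional c le_kl _) _.
  by rewrite size_ys.
by move=> P _; rewrite mxmonomial_tensor -rowE !mxE.
Qed.

End MonomialsInPolL.

(** * Polynomials in the entries *)

Lemma msize_exp_le (R : idomainType) n (q : {mpoly R[n]}) s :
  (msize (q ^+ s) <= (msize q).-1 * s + 1)%N.
Proof.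
elim: s => [|s IH]; first by rewrite expr0 msize1 muln0.
have [->|q_neq0] := eqVneq q 0; first by rewrite expr0n msize0.
rewrite exprSr msizeM ?expf_neq0 //.
by move: IH (mlead_deg q_neq0); lia.
Qed.

Section PolynomialView.
Variables (R : realType) (d : nat).
Implicit Types (M P : 'M[R]_d).

Local Notation entries P := (fun j : 'I_(d * d) => mxvec P 0 j).

Definition mxdot_mpoly M : {mpoly R[d * d]} := \sum_j mxvec M^T 0 j *: 'X_j.

Lemma meval_mxdot_mpoly M P : (mxdot_mpoly M).@[entries P] = mxdot M P.
Proof.
rewrite mxdot_mxvec /mxdot_mpoly raddf_sum.
by apply: eq_bigr => j _ /=; rewrite mevalZ mevalXU.
Qed.

Lemma msize_mxdot_mpoly M : (msize (mxdot_mpoly M) <= 2)%N.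
Proof.
apply: leq_trans (msize_sum _ _ _) _; apply/bigmax_leqP => j _.
by apply: leq_trans (msizeZ_le _ _) _; rewrite msizeX mdeg1.
Qed.

Lemma in_PolL_Pol k l t (f : 'M[R]_d -> R) : in_PolL k l t f -> in_Pol k t f.
Proof.
case=> n [c [M [s [okM fM]]]].
exists (\sum_(i < n) c i *: mxdot_mpoly (M i) ^+ s i); split.
  apply: leq_trans (msize_sum _ _ _) _; apply/bigmax_leqP => i _.
  apply: leq_trans (msizeZ_le _ _) (leq_trans (msize_exp_le _ _) _).
  have [_ [_ le_st]] := okM i.
  have le1 : ((msize (mxdot_mpoly (M i))).-1 <= 1)%N.
    by have := msize_mxdot_mpoly (M i); lia.
  by rewrite addn1 ltnS (leq_trans (leq_mul le1 le_st)) ?mul1n.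
move=> P GP; rewrite fM // raddf_sum; apply: eq_bigr => i _.
by rewrite /= mevalZ rmorphXn /= meval_mxdot_mpoly.
Qed.

Lemma mxmonomial_mdeg (m : 'X_{1..d * d}) : exists xs, size xs = mdeg m /\
  forall P, \prod_(i < d * d) mxvec P 0 i ^+ m i = mxmonomial P xs.
Proof.
exists (flatten [seq nseq (m i) i | i <- enum 'I_(d * d)]); split.
  rewrite size_flatten /shape -map_comp sumnE big_map big_enum mdegE /=.
  by apply: eq_bigr => i _; rewrite size_nseq.
move=> P; rewrite /mxmonomial big_flatten big_map big_enum /=.
by apply: eq_bigr => i _; rewrite big_nseq iter_mulr_1.
Qed.

Lemma in_Pol_PolL k l t (f : 'M[R]_d -> R) :
  (forall xs, (size xs <= t)%N -> in_PolL_seq k l t (fun P => mxmonomial P xs)) ->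
  in_Pol k t f -> in_PolL k l t f.
Proof.
move=> monoPolL [p [size_p fp]]; apply: in_PolL_of_seq.
pose F m P := p@_m * \prod_(i < d * d) mxvec P 0 i ^+ m i.
apply: in_PolL_seq_ext (in_PolL_seq_sum (r := msupp p) (F := F) _) _; last first.
  by move=> P GP; rewrite fp // mevalE.
move=> m m_supp; apply: in_PolL_seq_scale.
have [xs [size_xs mono]] := mxmonomial_mdeg m.
apply: in_PolL_seq_ext (monoPolL xs _) _ => [|P _]; last by rewrite mono.
by rewrite size_xs -ltnS (leq_trans (msize_mdeg_lt m_supp) size_p).
Qed.

End PolynomialView.

Theorem proposition5p1 (R : realType) (k d l t : nat) :
  (1 <= k)%N -> (k < d)%N -> (l < d)%N -> (minn k t <= l)%N ->
  forall f : 'M[R]_d -> R, @in_PolL R k d l t f <-> @in_Pol R k d t f.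
Proof.
move=> k_gt0 _ _ le_min f; split; first exact: in_PolL_Pol.
apply: in_Pol_PolL => xs le_xs; have [le_kl | lt_lk] := leqP k l.
  exact: in_PolL_seq_monomial_large.
by apply: in_PolL_seq_monomial_small => //; move: le_min; rewrite minnE; lia.
Qed.
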